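(* Let $q$ be a prime power, $m\ge1$, $g_1,\dots,g_n\in\mathbb{F}_{q^m}$ linearly independent over $\mathbb{F}_q$, $\mathbf g=(g_1,\dots,g_n)$, and $\mathbf r=(r_1,\dots,r_n)\in\mathbb{F}_{q^m}^n$. Assume the $q$-annihilator polynomials $\Pi_{\langle g_1,\dots,g_i\rangle}(x)$, $i=1,\dots,n$, have been precomputed. Then the $q$-Lagrange polynomial $\Lambda_{\mathbf g,\mathbf r}(x)$ can be computed with at most $\mathcal{O}_{q^m}(n^2)$ operations.
   Context: Write $[i]:=q^i$. $\Pi_{\langle g_1,\dots,g_i\rangle}(x)=\prod_{u\in\langle g_1,\dots,g_i\rangle}(x-u)$ (product over the $\mathbb{F}_q$-linear span). $\Lambda_{\mathbf g,\mathbf r}(x)=\sum_{i=1}^n(-1)^{n-i}r_i\det(\mathfrak D_i(\mathbf g,x))/\det(M_n(g_1,\dots,g_n))$, where $M_n(v_1,\dots,v_s)$ is the $n\times s$ matrix with $(j,l)$ entry $v_l^{[j-1]}$ and $\mathfrak D_i(\mathbf g,x)$ is $M_n(g_1,\dots,g_n,x)$ with column $i$ removed; it is a $q$-linearized polynomial $\sum_{i=0}^{n-1}a_ix^{[i]}$ with $\Lambda_{\mathbf g,\mathbf r}(g_i)=r_i$, to be computed as its list of coefficients. Complexity conventions: elements of $\mathbb{F}_{q^m}$ are stored as coordinate vectors w.r.t. a normal basis of $\mathbb{F}_{q^m}$ over $\mathbb{F}_q$, so $q$-th powers are free; $\mathcal{O}_{q^m}(\cdot)$ counts arithmetic operations in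 $\mathbb{F}_{q^m}$. *)

From HB Require Import structures.
From mathcomp Require Import all_boot all_order all_algebra.
Set Implicit Arguments. Unset Strict Implicit. Unset Printing Implicit Defensive.
Import GRing.Theory.
Local Open Scope ring_scope.

Section Defs.
Variable F : finFieldType.
Variable q : nat.

Definition prime_power (q : nat) : Prop :=
  exists p k : nat, [/\ prime p, (0 < k)%N & q = (p ^ k)%N].

Definition qpow (x : F) (i : nat) : F := x ^+ (q ^ i).

Definition inFq (x : F) : bool := x ^+ q == x.

Definition lin_indep_Fq (n : nat) (g : 'I_n -> F) : Prop :=
  forall c : 'I_n -> F, (forall i, inFq (c i)) ->
    \sum_(i < n) c i * g i = 0 -> forall i, c i = 0.

Definition in_span (k : nat) (gk : 'I_k -> F) (u : F) : bool :=
  [exists c : {ffun 'I_k -> F}, [forall i, inFq (c i)] && (u == \sum_(i < k) c i * gk i)].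

Definition annPoly (k : nat) (gk : 'I_k -> F) : {poly F} :=
  \prod_(u : F | in_span gk u) ('X - u%:P).

(* prefix (g_1,...,g_{i+1}) for 0-indexed i *)
Definition gprefix (n : nat) (g : 'I_n -> F) (i : 'I_n) : 'I_i.+1 -> F :=
  fun k => g (widen_ord (ltn_ord i) k).

Definition moore (n : nat) (g : 'I_n -> F) : 'M[F]_n :=
  \matrix_(j < n, l < n) qpow (g l) j.

Definition gxcol (n : nat) (g : 'I_n -> F) (l : 'I_n.+1) (j : nat) : {poly F} :=
  match unlift ord_max l with
  | Some l' => (qpow (g l') j)%:P
  | None => 'X^(q ^ j)
  end.

(* D_i(g,x): M_n(g_1,...,g_n,x) with column i removed (0-indexed i) *)
Definition Dmat (n : nat) (g : 'I_n -> F) (i : 'I_n) : 'M[{poly F}]_n :=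
  \matrix_(j < n, l < n) gxcol g (lift (widen_ord (leqnSn n) i) l) j.

Definition qLagrange (n : nat) (g r : 'I_n -> F) : {poly F} :=
  \sum_(i < n) (((-1) ^+ (n - i.+1) * r i) / \det (moore g)) *: \det (Dmat g i).

End Defs.

(* Each instruction appends one value to the state; operands are indices into
   the state.  Frobenius powers x^{[k]} are free (normal basis convention);
   additions, subtractions, multiplications and inversions cost 1.
   Inverting 0 aborts the computation. *)
Inductive instr (F : Type) :=
| IConst of F
| IAdd of nat & nat
| ISub of nat & nat
| IMul of nat & nat
| IInv of nat
| IFrob of nat & nat.

Section SLP.
Variable F : fieldType.
Variable q : nat.

Definition step (st : seq F) (ins : instr F) : option F :=
  match ins with
  | IConst c => Some c
  | IAdd a b => Some (st`_a + st`_b)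
  | ISub a b => Some (st`_a - st`_b)
  | IMul a b => Some (st`_a * st`_b)
  | IInv a => if st`_a == 0 then None else Some (st`_a)^-1
  | IFrob k a => Some (st`_a ^+ (q ^ k))
  end.

Fixpoint run (st : seq F) (P : seq (instr F)) : option (seq F) :=
  match P with
  | [::] => Some st
  | ins :: P' => match step st ins with
                 | Some v => run (rcons st v) P'
                 | None => None
                 end
  end.

Definition is_arith (ins : instr F) : bool :=
  match ins with
  | IAdd _ _ | ISub _ _ | IMul _ _ | IInv _ => true
  | _ => false
  end.

Definition cost (P : seq (instr F)) : nat := count is_arith P.
End SLP.

(* input layout: g_1..g_n, r_1..r_n, then the q-coefficients of Pi_1..Pi_n *)
Definition slp_inputs (F : Type) (n : nat) (g r : 'I_n -> F)
  (b : 'I_n -> 'I_n.+1 -> F) : seq F :=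
  [seq g i | i <- enum 'I_n] ++ [seq r i | i <- enum 'I_n] ++
  flatten [seq [seq b i j | j <- enum 'I_n.+1] | i <- enum 'I_n].

Arguments gprefix {F n} g i _.
Arguments annPoly {F} q {k} gk.

(* The coefficients of Lambda_{g,r} are computed by Newton interpolation for
   q-linearized polynomials: Lambda_0 = 0 and
     Lambda_(k+1) = Lambda_k + (r_(k+1) - Lambda_k(g_(k+1))) / Pi_k(g_(k+1)) * Pi_k,
   with Pi_0 = x and Pi_k the precomputed annihilator of <g_1, ..., g_k>.  Each
   step evaluates two q-polynomials with n coefficients (Frobenius powers are
   free), performs one division and updates n coefficients, so it costs O(n)
   operations.  Linear independence makes Pi_k(g_(k+1)) nonzero, and Pi_k
   vanishes at g_1, ..., g_k, so Lambda_n interpolates r.  Interpolating the unit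
   vectors yields a left inverse of the Moore matrix, which is therefore
   invertible; hence q-polynomials of q-degree < n are determined by their
   values at the g_l.  Expanding the Moore determinant of (g_1, ..., g_n, x)
   bordered by r shows that the Cramer-rule formula Lambda_{g,r} is such a
   q-polynomial with the same values, so it equals Lambda_n. *)

From mathcomp Require Import all_boot all_order all_algebra finfield.
From mathcomp Require Import zify ring.
Import GRing.Theory.
Local Open Scope ring_scope.
Set Implicit Arguments. Unset Strict Implicit. Unset Printing Implicit Defensive.

Definition qeval (R : nzRingType) (q m : nat) (a : nat -> R) (x : R) : R :=
  \sum_(j < m) a j * x ^+ (q ^ j).

Lemma horner_qpoly (R : comNzRingType) (q m : nat) (a : 'I_m -> R) (x : R) :
  (\sum_(j < m) a j *: 'X^(q ^ j)).[x] = \sum_(j < m) a j * x ^+ (q ^ j).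
Proof.
by rewrite horner_sum; apply: eq_bigr => j _; rewrite hornerZ hornerXn.
Qed.

Lemma qeval_axpy (R : comNzRingType) (q m : nat) (a b : nat -> R) (c x : R) :
  qeval q m (fun j => a j + c * b j) x = qeval q m a x + c * qeval q m b x.
Proof. by rewrite /qeval mulr_sumr -big_split; apply: eq_bigr => j _ /=; ring. Qed.

Section NthCat.
Variables (T : Type) (x0 : T).

Lemma nth_cat_small (s t : seq T) k : (k < size s)%N -> nth x0 (s ++ t) k = nth x0 s k.
Proof. by move=> lt_k; rewrite nth_cat lt_k. Qed.

Lemma nth_cat_size (s t : seq T) k : nth x0 (s ++ t) (size s + k) = nth x0 t k.
Proof. by rewrite nth_cat ltnNge leq_addr /= addKn. Qed.

Lemma nth_rcons_small (s : seq T) x k : (k < size s)%N -> nth x0 (rcons s x) k = nth x0 s k.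
Proof. by move=> lt_k; rewrite nth_rcons lt_k. Qed.

Lemma nth_rcons_last (s : seq T) x k : k = size s -> nth x0 (rcons s x) k = x.
Proof. by move=> ->; rewrite nth_rcons ltnn eqxx. Qed.

End NthCat.

Section StraightLinePrograms.
Variables (F : fieldType) (q : nat).

Lemma run_cat (st : seq F) P1 P2 :
  run q st (P1 ++ P2) = if run q st P1 is Some st' then run q st' P2 else None.
Proof.
by elim: P1 st => [|i P1 IH] st //=; case: (step q st i) => // v; apply: IH.
Qed.

Lemma cost_cat (P1 P2 : seq (instr F)) : cost (P1 ++ P2) = (cost P1 + cost P2)%N.
Proof. by rewrite /cost count_cat. Qed.

Fixpoint qeval_prog (s G : nat) (L : nat -> nat) (m : nat) : seq (instr F) :=
  if m is m'.+1 then qeval_prog s G L m' ++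
    [:: IFrob F m' G; IMul F (L m') (s + 3 * m' + 1); IAdd F (s + 3 * m') (s + 3 * m' + 2)]
  else [:: IConst 0].

Lemma cost_qeval_prog s G L m : cost (qeval_prog s G L m) = (2 * m)%N.
Proof. by elim: m => [|m IH] //=; rewrite cost_cat IH /cost /=; lia. Qed.

Lemma run_qeval_prog (st : seq F) s G L m :
  size st = s -> (G < s)%N -> (forall j, (j < m)%N -> (L j < s)%N) ->
  exists t, run q st (qeval_prog s G L m) = Some (st ++ t) /\ size t = (3 * m + 1)%N /\
    (st ++ t)`_(s + 3 * m) = qeval q m (fun j => st`_(L j)) st`_G.
Proof.
move=> size_st lt_G; elim: m => [|m IH] lt_L.
  exists [:: 0]; split; first by rewrite /= cats1.
  by split=> //; rewrite /qeval big_ord0 muln0 -size_st nth_cat_size.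
have [t [run_t [size_t val_t]]] := IH (fun j lt_j => lt_L j (ltnW lt_j)).
set u := st ++ t.
have size_u : size u = (s + 3 * m + 1)%N by rewrite size_cat size_st size_t addnA.
have lt_Lm := lt_L m (ltnSn m).
set v1 := u`_G ^+ (q ^ m); set v2 := u`_(L m) * v1; set v3 := u`_(s + 3 * m) + v2.
exists (t ++ [:: v1; v2; v3]); split.
  rewrite run_cat run_t /= -/u -/v1 nth_rcons_small ?size_u; last lia.
  rewrite nth_rcons_last ?size_u // -/v2.
  rewrite nth_rcons_small ?size_rcons ?size_u; last lia.
  rewrite nth_rcons_small ?size_u; last lia.
  rewrite nth_rcons_last ?size_rcons ?size_u; last lia.
  by rewrite -/v3 catA -/u -!cats1 -!catA.
split; first by rewrite size_cat size_t /=; lia.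
rewrite catA -/u (_ : (s + 3 * m.+1 = size u + 2)%N); last by rewrite size_u; lia.
rewrite nth_cat_size /= /v3 val_t /qeval big_ord_recr /= /v2 /v1 /u.
by rewrite !nth_cat_small ?size_st //; lia.
Qed.

Fixpoint axpy_prog (s C : nat) (L P : nat -> nat) (m : nat) : seq (instr F) :=
  if m is m'.+1 then axpy_prog s C L P m' ++
    [:: IMul F C (P m'); IAdd F (L m') (s + 2 * m')]
  else [::].

Lemma cost_axpy_prog s C L P m : cost (axpy_prog s C L P m) = (2 * m)%N.
Proof. by elim: m => [|m IH] //=; rewrite cost_cat IH /cost /=; lia. Qed.

Lemma run_axpy_prog (st : seq F) s C L P m :
  size st = s -> (C < s)%N -> (forall j, (j < m)%N -> (L j < s)%N /\ (P j < s)%N) ->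
  exists t, run q st (axpy_prog s C L P m) = Some (st ++ t) /\ size t = (2 * m)%N /\
    forall j, (j < m)%N -> (st ++ t)`_(s + 2 * j + 1) = st`_(L j) + st`_C * st`_(P j).
Proof.
move=> size_st lt_C; elim: m => [|m IH] lt_LP.
  by exists [::]; rewrite cats0.
have [t [run_t [size_t val_t]]] := IH (fun j lt_j => lt_LP j (ltnW lt_j)).
set u := st ++ t.
have size_u : size u = (s + 2 * m)%N by rewrite size_cat size_st size_t.
have [lt_Lm lt_Pm] := lt_LP m (ltnSn m).
set v1 := u`_C * u`_(P m); set v2 := u`_(L m) + v1.
exists (t ++ [:: v1; v2]); split.
  rewrite run_cat run_t /= -/u -/v1 nth_rcons_small ?size_u; last lia.
  by rewrite nth_rcons_last ?size_u // -/v2 catA -/u -!cats1 -!catA.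
split; first by rewrite size_cat size_t /=; lia.
move=> j; rewrite ltnS leq_eqVlt => /orP [/eqP -> | lt_j].
  rewrite catA -/u (_ : (s + 2 * m + 1 = size u + 1)%N); last by rewrite size_u.
  by rewrite nth_cat_size /= /v2 /v1 /u !nth_cat_small ?size_st //; lia.
by rewrite catA -/u nth_cat_small ?size_u ?val_t //; lia.
Qed.

Definition ratio_prog (s R E D : nat) : seq (instr F) :=
  [:: ISub F R E; IInv F D; IMul F s s.+1].

Lemma run_ratio_prog (st : seq F) s R E D :
  size st = s -> (R < s)%N -> (E < s)%N -> (D < s)%N -> st`_D != 0 ->
  run q st (ratio_prog s R E D) =
    Some (st ++ [:: st`_R - st`_E; (st`_D)^-1; (st`_R - st`_E) / st`_D]).
Proof.
move=> size_st lt_R lt_E lt_D nz_D.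
rewrite /= nth_rcons_small ?size_st // (negbTE nz_D).
rewrite nth_rcons_small ?size_rcons ?size_st // !nth_rcons_last ?size_rcons ?size_st //.
by rewrite -!cats1 -!catA.
Qed.

Definition newton_step_prog (n s G R : nat) (L P : nat -> nat) : seq (instr F) :=
  qeval_prog s G L n ++ qeval_prog (s + 3 * n + 1) G P n ++
  ratio_prog (s + 6 * n + 2) R (s + 3 * n) (s + 6 * n + 1) ++
  axpy_prog (s + 6 * n + 5) (s + 6 * n + 4) L P n.

Lemma cost_newton_step_prog n s G R L P :
  cost (newton_step_prog n s G R L P) = (6 * n + 3)%N.
Proof.
by rewrite /newton_step_prog !cost_cat !cost_qeval_prog cost_axpy_prog /cost /=; lia.
Qed.

Lemma run_newton_step_prog (st : seq F) n s G R L P :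
  size st = s -> (G < s)%N -> (R < s)%N ->
  (forall j, (j < n)%N -> (L j < s)%N /\ (P j < s)%N) ->
  qeval q n (fun j => st`_(P j)) st`_G != 0 ->
  exists t, run q st (newton_step_prog n s G R L P) = Some (st ++ t) /\
    size t = (8 * n + 5)%N /\
    forall j, (j < n)%N -> (st ++ t)`_(s + 6 * n + 6 + 2 * j) =
      st`_(L j) + (st`_R - qeval q n (fun j => st`_(L j)) st`_G) /
                  qeval q n (fun j => st`_(P j)) st`_G * st`_(P j).
Proof.
move=> size_st lt_G lt_R lt_LP nz_P.
have [t1 [run1 [size1 val1]]] := run_qeval_prog size_st lt_G (fun j lt_j => (lt_LP j lt_j).1).
set u1 := st ++ t1.
have size_u1 : size u1 = (s + 3 * n + 1)%N by rewrite size_cat size_st size1; lia.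
have [t2 [run2 [size2 val2]]] := run_qeval_prog (G := G) (L := P) (m := n) size_u1
   ltac:(lia) (fun j lt_j => ltac:(have := lt_LP j lt_j; lia)).
set u2 := u1 ++ t2.
have size_u2 : size u2 = (s + 6 * n + 2)%N by rewrite size_cat size_u1 size2; lia.
have u2_st k : (k < s)%N -> u2`_k = st`_k.
  by move=> lt_k; rewrite /u2 /u1 -catA nth_cat_small ?size_st.
have u2_E : u2`_(s + 3 * n) = qeval q n (fun j => st`_(L j)) st`_G.
  by rewrite /u2 nth_cat_small ?size_u1 ?val1 //; lia.
have u2_D : u2`_(s + 6 * n + 1) = qeval q n (fun j => st`_(P j)) st`_G.
  rewrite (_ : (s + 6 * n + 1 = s + 3 * n + 1 + 3 * n)%N); last lia.
  rewrite val2; apply: eq_bigr => j _.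
  by have [_ lt_Pj] := lt_LP j (ltn_ord j); rewrite /u1 !nth_cat_small ?size_st.
have nz_D : u2`_(s + 6 * n + 1) != 0 by rewrite u2_D.
have [lt_R' lt_E lt_D] : [/\ R < s + 6 * n + 2, s + 3 * n < s + 6 * n + 2
                          & s + 6 * n + 1 < s + 6 * n + 2]%N by split; lia.
have run3 := run_ratio_prog size_u2 lt_R' lt_E lt_D nz_D.
set w := [:: _; _; _] in run3; set u3 := u2 ++ w in run3.
have size_u3 : size u3 = (s + 6 * n + 5)%N by rewrite size_cat size_u2 /=; lia.
have [t4 [run4 [size4 val4]]] := run_axpy_prog (C := s + 6 * n + 4) (L := L) (P := P)
   (m := n) size_u3 ltac:(lia) (fun j lt_j => ltac:(have := lt_LP j lt_j; lia)).
exists (t1 ++ t2 ++ w ++ t4); split.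
  by rewrite run_cat run1 run_cat -/u1 run2 run_cat -/u2 run3 run4 /u3 /u2 /u1 !catA.
split; first by rewrite !size_cat size1 size2 size4 /=; lia.
move=> j lt_j; have [lt_Lj lt_Pj] := lt_LP j lt_j.
rewrite (_ : st ++ _ = u3 ++ t4); last by rewrite /u3 /u2 /u1 !catA.
rewrite (_ : (s + 6 * n + 6 + 2 * j = s + 6 * n + 5 + 2 * j + 1)%N); last lia.
rewrite val4 // /u3 (_ : (s + 6 * n + 4 = size u2 + 2)%N); last by rewrite size_u2; lia.
rewrite nth_cat_size /w /= !(@nth_cat_small _ _ u2) ?size_u2 ?u2_E ?u2_D ?u2_st //; lia.
Qed.

End StraightLinePrograms.

Section NewtonInterpolation.
Variables (F : fieldType) (q n : nat).
Variables (x r : nat -> F) (pi : nat -> nat -> F).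

Fixpoint newton_coef k j : F :=
  if k is k'.+1 then
    newton_coef k' j +
      (r k' - qeval q n (newton_coef k') (x k')) / qeval q n (pi k') (x k') * pi k' j
  else 0.

Hypothesis pi_pivot : forall k, (k < n)%N -> qeval q n (pi k) (x k) != 0.
Hypothesis pi_root : forall k l, (k < n)%N -> (l < k)%N -> qeval q n (pi k) (x l) = 0.

Lemma newton_coef_interp l : (l < n)%N -> qeval q n (newton_coef n) (x l) = r l.
Proof.
suff interp k : (k <= n)%N -> forall i, (i < k)%N -> qeval q n (newton_coef k) (x i) = r i.
  exact: interp.
elim: k => [|k IH] le_kn i //=; rewrite ltnS leq_eqVlt => /orP [/eqP -> | lt_ik].
  by rewrite qeval_axpy; field; apply: pi_pivot.
by rewrite qeval_axpy (IH (ltnW le_kn) i lt_ik) (pi_root le_kn lt_ik) mulr0 addr0.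
Qed.

End NewtonInterpolation.

Section LagrangeProgram.
Variables (F : fieldType) (q n : nat).

(* The state starts with the [input_size] inputs of [slp_inputs], followed by
   the constants 0 and 1 (the coefficients of Pi_0 = x) and then one block of
   [8n + 5] cells per Newton step; coefficient j of Lambda_k sits in
   [coef_slot k j] and that of Pi_k in [ann_slot k j]. *)
Definition input_size := (2 * n + n * n.+1)%N.
Definition block_start k := (input_size + 2 + k * (8 * n + 5))%N.
Definition coef_slot k j :=
  if k is k'.+1 then (block_start k' + 6 * n + 6 + 2 * j)%N else input_size.
Definition ann_slot k j :=
  if k is k'.+1 then (2 * n + k' * n.+1 + j)%N
  else if j == 0%N then input_size.+1 else input_size.

Fixpoint newton_prog k : seq (instr F) :=
  if k is k'.+1 then
    newton_prog k' ++
    newton_step_prog F n (block_start k') k' (n + k') (coef_slot k') (ann_slot k')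
  else [::].

Definition lagrange_prog := [:: IConst (0 : F); IConst 1] ++ newton_prog n.
Definition lagrange_out := [seq coef_slot n j | j <- iota 0 n].

Lemma cost_lagrange_prog : (cost lagrange_prog <= 9 * n ^ 2)%N.
Proof.
have cost_newton k : cost (newton_prog k) = (k * (6 * n + 3))%N.
  by elim: k => [|k IH] //=; rewrite cost_cat IH cost_newton_step_prog; lia.
by rewrite cost_cat cost_newton /cost /=; nia.
Qed.

Variable inp : seq F.
Hypothesis size_inp : size inp = input_size.

Definition ann_coef k j := (inp ++ [:: 0; 1])`_(ann_slot k j).
Definition lagrange_coef :=
  newton_coef q n (fun k => inp`_k) (fun k => inp`_(n + k)) ann_coef n.

Hypothesis ann_pivot :
  forall k, (k < n)%N -> qeval q n (ann_coef k) inp`_k != 0.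

Lemma run_newton_prog k : (k <= n)%N ->
  exists t, run q (inp ++ [:: 0; 1]) (newton_prog k) = Some ((inp ++ [:: 0; 1]) ++ t) /\
    size ((inp ++ [:: 0; 1]) ++ t) = block_start k /\
    forall j, (j < n)%N -> ((inp ++ [:: 0; 1]) ++ t)`_(coef_slot k j) =
      newton_coef q n (fun k => inp`_k) (fun k => inp`_(n + k)) ann_coef k j.
Proof.
set st0 := inp ++ [:: 0; 1].
have size_st0 : size st0 = (input_size + 2)%N by rewrite size_cat size_inp.
elim: k => [|k IH] le_kn.
  exists [::]; rewrite cats0 -/st0; split=> //; split; first by rewrite size_st0 /block_start; lia.
  by move=> j _; rewrite nth_cat size_inp ltnn subnn.
have [t [run_t [size_t val_t]]] := IH (ltnW le_kn).
set st := st0 ++ t.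
have st_inp i : (i < input_size)%N -> st`_i = inp`_i.
  by move=> lt_i; rewrite /st /st0 -catA nth_cat_small ?size_inp.
have st_ann j : (j < n)%N -> st`_(ann_slot k j) = ann_coef k j.
  move=> lt_j; rewrite /st nth_cat_small // size_st0 /ann_slot /input_size.
  by case: k {IH run_t size_t val_t st st_inp} le_kn => [|k] ?; [case: eqP; lia | nia].
have lt_slots j : (j < n)%N -> (coef_slot k j < block_start k)%N /\
                                (ann_slot k j < block_start k)%N.
  move=> lt_j; rewrite /coef_slot /ann_slot /block_start /input_size.
  by case: k {IH run_t size_t val_t st st_inp st_ann} le_kn => [|k] ?;
    [case: eqP; split; lia | split; nia].
have [lt_k lt_nk] : (k < block_start k /\ n + k < block_start k)%N.
  by rewrite /block_start /input_size; split; lia.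
have qeval_st (a : nat -> nat) (c : nat -> F) : (forall j, (j < n)%N -> st`_(a j) = c j) ->
    qeval q n (fun j => st`_(a j)) st`_k = qeval q n c inp`_k.
  move=> st_a; rewrite /qeval st_inp; last by rewrite /input_size; lia.
  by apply: eq_bigr => j _; rewrite st_a.
have nz_pivot : qeval q n (fun j => st`_(ann_slot k j)) st`_k != 0.
  by rewrite (qeval_st _ _ st_ann); apply: ann_pivot.
have [t' [run_t' [size_t' val_t']]] := run_newton_step_prog size_t lt_k lt_nk lt_slots nz_pivot.
exists (t ++ t'); rewrite catA -/st; split.
  by rewrite run_cat run_t run_t'.
split; first by rewrite size_cat size_t size_t' /block_start; lia.
move=> j lt_j; rewrite val_t' // (qeval_st _ _ st_ann) (qeval_st _ _ val_t).
rewrite val_t // st_ann // st_inp //; rewrite /input_size; lia.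
Qed.

Lemma run_lagrange_prog :
  exists st, run q inp lagrange_prog = Some st /\
    forall j, (j < n)%N -> st`_(nth 0%N lagrange_out j) = lagrange_coef j.
Proof.
have [t [run_t [_ val_t]]] := run_newton_prog (leqnn n).
exists ((inp ++ [:: 0; 1]) ++ t); split; first by rewrite run_cat /= -!cats1 -catA.
by move=> j lt_j; rewrite (nth_map 0%N) ?size_iota // nth_iota // val_t.
Qed.

End LagrangeProgram.

Section ColumnOperation.
Variables (R : comNzRingType) (m : nat).

Lemma det_1_sub_delta (j k : 'I_m) : j != k -> \det (1%:M - delta_mx j k : 'M[R]_m) = 1.
Proof.
move=> neq_jk.
have diag1 i : (1%:M - delta_mx j k : 'M[R]_m) i i = 1.
  by rewrite !mxE eqxx; case: (i =P j) => [->|] /=; rewrite ?(negbTE neq_jk) subr0.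
have off0 i l : i != l -> (i, l) != (j, k) -> (1%:M - delta_mx j k : 'M[R]_m) i l = 0.
  by rewrite !mxE => /negbTE-> neq_il; rewrite -xpair_eqE (negbTE neq_il) subr0.
case: (ltngtP j k) => [lt_jk | lt_kj | /val_inj eq_jk]; last by rewrite eq_jk eqxx in neq_jk.
  rewrite -det_tr det_trig; first by apply: big1 => i _; rewrite mxE diag1.
  apply/is_trig_mxP => i l lt_il; rewrite mxE off0 //; first by rewrite neq_ltn lt_il orbT.
  by rewrite xpair_eqE negb_and; case: eqP => //= eq_lj; rewrite neq_ltn (ltn_trans lt_il) // eq_lj.
rewrite det_trig; first by apply: big1 => i _; rewrite diag1.
apply/is_trig_mxP => i l lt_il; rewrite off0 //; first by rewrite neq_ltn lt_il.
by rewrite xpair_eqE negb_and; case: eqP => //= eq_ij; rewrite neq_ltn (ltn_trans lt_kj) ?orbT // -eq_ij.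
Qed.

Lemma det_subcol (A : 'M[R]_m) (j k : 'I_m) : j != k ->
  \det (\matrix_(a, c) (A a c - (c == k)%:R * A a j)) = \det A.
Proof.
move=> neq_jk.
suff -> : \matrix_(a, c) (A a c - (c == k)%:R * A a j) = A *m (1%:M - delta_mx j k).
  by rewrite det_mulmx det_1_sub_delta // mulr1.
apply/matrixP => a c; rewrite mulmxBr mulmx1 !mxE; congr (_ - _).
rewrite (bigD1 j) //= big1 ?addr0 => [|i /negbTE neq_ij]; last by rewrite mxE neq_ij mulr0.
by rewrite mxE eqxx mulrC.
Qed.

End ColumnOperation.

Section BorderedMoore.
Variables (F : finFieldType) (q n : nat) (g r : 'I_n -> F).

Lemma unlift_max_widen (i : 'I_n) : unlift ord_max (widen_ord (leqnSn n) i) = Some i.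
Proof.
suff -> : widen_ord (leqnSn n) i = lift ord_max i by apply: liftK.
by apply: val_inj; rewrite /= /bump leqNgt ltn_ord.
Qed.

(* The n x (n+1) matrix M_n(g_1, ..., g_n, x) with the row (r_1, ..., r_n, 0)
   appended; its determinant is, up to the factor -det M_n(g), the numerator of
   Lambda_{g,r}. *)
Definition moore_border : 'M[{poly F}]_n.+1 := \matrix_(a, c)
  match unlift ord_max a with
  | Some j => gxcol q g c j
  | None => if unlift ord_max c is Some l then (r l)%:P else 0
  end.

Lemma det_moore_border :
  \det moore_border = \sum_(i < n) ((-1) ^+ (n + i) * r i) *: \det (Dmat q g i).
Proof.
rewrite (expand_det_row _ ord_max) big_ord_recr /= !mxE !unlift_none mul0r addr0.
apply: eq_bigr => i _; rewrite !mxE unlift_none unlift_max_widen /cofactor.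
have -> : row' ord_max (col' (widen_ord (leqnSn n) i) moore_border) = Dmat q g i.
  by apply/matrixP => a l; rewrite !mxE liftK.
by rewrite /= -mul_polyC rmorphM /= rmorph_sign mulrCA mulrA.
Qed.

Lemma qLagrange_moore_border :
  qLagrange q g r = - (\det (moore q g))^-1 *: \det moore_border.
Proof.
rewrite det_moore_border scaler_sumr /qLagrange; apply: eq_bigr => i _.
have sign_i : (-1) ^+ (n + i) = - (-1) ^+ (n - i.+1) :> F.
  rewrite (_ : (n + i = (n - i.+1) + (i + i).+1)%N); last by have := ltn_ord i; lia.
  by rewrite exprD exprS -(signr_odd _ (i + i)) oddD addbb /=; ring.
by rewrite scalerA sign_i; congr (_ *: _); ring.
Qed.

Lemma det_moore_border_qpoly :
  exists a : nat -> F, \det moore_border = \sum_(j < n) a j *: 'X^(q ^ j).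
Proof.
pose minor (j : 'I_n) : 'M[{poly F}]_n := row' (widen_ord (leqnSn n) j) (col' ord_max moore_border).
have minor_const j : minor j = map_mx polyC (map_mx (fun p : {poly F} => p`_0) (minor j)).
  apply/matrixP => a c; rewrite !mxE /gxcol liftK.
  by case: unlift => [?|] /=; rewrite coefC.
exists (fun j => if insub j is Some j' then
  (-1) ^+ (j + n) * \det (map_mx (fun p : {poly F} => p`_0) (minor j')) else 0).
rewrite (expand_det_col _ ord_max) big_ord_recr /= !mxE !unlift_none mul0r addr0.
apply: eq_bigr => j _; rewrite !mxE unlift_max_widen /gxcol unlift_none /cofactor.
rewrite valK -/(minor j) [in LHS]minor_const det_map_mx -mul_polyC rmorphM /= rmorph_sign.
by rewrite mulrC.
Qed.

Lemma horner_det_moore_border (l : 'I_n) :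
  (\det moore_border).[g l] = - r l * \det (moore q g).
Proof.
set wl := widen_ord (leqnSn n) l.
have neq_wl : wl != ord_max by rewrite -val_eqE /= neq_ltn ltn_ord.
rewrite -horner_evalE -det_map_mx -(det_subcol _ neq_wl).
set C := \matrix_(a, c) _.
have C_last j : C (widen_ord (leqnSn n) j) ord_max = 0.
  rewrite !mxE eqxx !unlift_max_widen /gxcol unlift_none /wl unlift_max_widen /= !horner_evalE.
  by rewrite hornerXn hornerC /qpow mul1r subrr.
have C_minor : row' ord_max (col' ord_max C) = moore q g.
  apply/matrixP => a c; rewrite !mxE eq_sym (negbTE (neq_lift _ _)) mul0r subr0.
  by rewrite !liftK /gxcol liftK /= horner_evalE hornerC.
rewrite (expand_det_col _ ord_max) big_ord_recr /= big1 ?add0r => [|j _]; last first.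
  by rewrite C_last mul0r.
rewrite /cofactor C_minor -signr_odd addnn odd_double expr0 mul1r; congr (_ * _).
rewrite !mxE eqxx /wl !unlift_none unlift_max_widen /= !horner_evalE horner0 hornerC.
by rewrite mul1r sub0r.
Qed.

End BorderedMoore.

Section SubfieldFq.
Variables (F : finFieldType) (q m : nat).
Hypothesis q_prime_power : prime_power q.
Hypothesis card_F : #|F| = (q ^ m)%N.

Lemma prime_power_gt1 : (1 < q)%N.
Proof.
case: q_prime_power => p [k [pr_p k_gt0 ->]].
exact: leq_trans (prime_gt1 pr_p) (leq_pexp2l (prime_gt0 pr_p) k_gt0).
Qed.

Lemma inFq0 : inFq q (0 : F).
Proof. by rewrite /inFq expr0n gtn_eqF ?(ltn_trans _ prime_power_gt1). Qed.

Lemma inFq1 : inFq q (1 : F).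
Proof. by rewrite /inFq expr1n. Qed.

Lemma inFqN1 : inFq q (-1 : F).
Proof.
case: q_prime_power => p [k [pr_p k_gt0 def_q]].
have char_p : p \in [pchar F].
  by apply: (card_finPcharP (n := (k * m)%N)) => //; rewrite card_F def_q expnM.
by rewrite /inFq exprNn_pchar ?expr1n // def_q pnatX pnatE // char_p.
Qed.

Lemma card_inFq : (#|[pred x : F | inFq q x]| <= q)%N.
Proof.
have size_P : size ('X^q - 'X : {poly F}) = q.+1.
  by rewrite size_addl ?size_polyXn // size_opp size_polyX; apply: prime_power_gt1.
have nz_P : 'X^q - 'X != 0 :> {poly F} by rewrite -size_poly_eq0 size_P.
have := max_poly_roots nz_P (rs := enum [pred x : F | inFq q x]).
rewrite size_P ltnS cardE; apply; last exact: enum_uniq.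
apply/allP => x; rewrite mem_enum inE /inFq => /eqP x_Fq.
by rewrite /root !hornerE x_Fq subrr.
Qed.

Lemma card_span k (gk : 'I_k -> F) : (#|[pred u | in_span q gk u]| <= q ^ k)%N.
Proof.
set D := [set c : {ffun 'I_k -> F} | [forall i, inFq q (c i)]].
have span_sub : [pred u | in_span q gk u] \subset (fun c : {ffun _ -> F} => \sum_(i < k) c i * gk i) @: D.
  apply/subsetP => u; rewrite inE => /existsP [c /andP [Fq_c /eqP ->]].
  by apply/imsetP; exists c; rewrite // inE.
apply: leq_trans (subset_leq_card span_sub) _; apply: leq_trans (leq_imset_card _ _) _.
have -> : #|D| = (#|[pred x : F | inFq q x]| ^ #|'I_k|)%N.
  rewrite -card_ffun_on; apply: eq_card => c; rewrite inE.
  by apply/forallP/ffun_onP => Fq_c x; have := Fq_c x.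
rewrite card_ord; case: k {gk D span_sub} => [|k]; first by rewrite !expn0.
by rewrite leq_exp2r // card_inFq.
Qed.

Lemma annPoly_enum k (gk : 'I_k -> F) :
  annPoly q gk = \prod_(u <- enum [pred u | in_span q gk u]) ('X - u%:P).
Proof. by rewrite big_enum. Qed.

Lemma root_annPoly k (gk : 'I_k -> F) x : root (annPoly q gk) x = in_span q gk x.
Proof. by rewrite annPoly_enum root_prod_XsubC mem_enum inE. Qed.

Lemma size_annPoly k (gk : 'I_k -> F) :
  size (annPoly q gk) = #|[pred u | in_span q gk u]|.+1.
Proof. by rewrite annPoly_enum size_prod_XsubC cardE. Qed.

Variables (n : nat) (g : 'I_n -> F).
Hypothesis g_indep : lin_indep_Fq q g.

Lemma lin_indep_Fq_neq0 l : g l != 0.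
Proof.
apply/negP => /eqP g_l0.
have /(_ l)/eqP : forall t, ((t == l)%:R : F) = 0.
  apply: g_indep => [t|]; first by case: eqP => _; rewrite ?inFq1 ?inFq0.
  by apply: big1 => t _; case: eqP => [->|_]; rewrite ?g_l0 ?mulr0 ?mul0r.
by rewrite eqxx oner_eq0.
Qed.

Lemma in_span_prefix (i l : 'I_n) : (l <= i)%N -> in_span q (gprefix g i) (g l).
Proof.
move=> le_li; set l' : 'I_i.+1 := Ordinal (le_li : (l < i.+1)%N).
apply/existsP; exists [ffun t => ((t == l')%:R : F)]; apply/andP; split.
  by apply/forallP => t; rewrite ffunE; case: eqP => _; rewrite ?inFq1 ?inFq0.
rewrite (bigD1 l') //= ffunE eqxx mul1r big1 ?addr0 => [|t /negbTE neq_tl].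
  by apply/eqP; rewrite /gprefix; congr g; apply: val_inj.
by rewrite ffunE neq_tl mul0r.
Qed.

Lemma notin_span_prefix (i k : 'I_n) : (i < k)%N -> ~~ in_span q (gprefix g i) (g k).
Proof.
move=> lt_ik; apply/negP => /existsP [c /andP [/forallP Fq_c /eqP span_k]].
pose c' (t : 'I_n) : F := if (t < i.+1)%N then c (inord t) else if t == k then -1 else 0.
have c'_k : c' k = -1 by rewrite /c' ltnNge lt_ik eqxx.
have /(_ k)/eqP : forall t, c' t = 0; last by rewrite c'_k oppr_eq0 oner_eq0.
apply: g_indep => [t|].
  by rewrite /c'; case: ifP => _; [apply: Fq_c | case: ifP => _; [apply: inFqN1 | apply: inFq0]].
rewrite (bigID (fun t : 'I_n => (t < i.+1)%N)) /=.
rewrite (big_ord_narrow_cond (P := predT) (F := fun t => c' t * g t) (ltn_ord i)) /=.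
rewrite (bigD1 k) /= -?leqNgt // [X in _ + (_ + X)]big1 => [|t /andP [lt_t neq_tk]]; last first.
  by rewrite /c' (negbTE lt_t) (negbTE neq_tk) mul0r.
rewrite c'_k mulN1r addr0 span_k; apply/eqP; rewrite subr_eq0; apply/eqP/eq_bigr => s _.
by rewrite /c' /= ltn_ord inord_val.
Qed.

End SubfieldFq.

Section FlattenConst.
Variables (T : Type) (x0 : T) (k : nat) (s : seq (seq T)).
Hypothesis size_s : all (fun x => size x == k) s.

Lemma size_flatten_const : size (flatten s) = (size s * k)%N.
Proof.
elim: s size_s => [|x s' IH] //= /andP [/eqP size_x size_s'].
by rewrite size_cat size_x IH // mulSn.
Qed.

Lemma nth_flatten_const i j : (i < size s)%N -> (j < k)%N ->
  nth x0 (flatten s) (i * k + j) = nth x0 (nth [::] s i) j.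
Proof.
elim: s size_s i => [|x s' IH] //= /andP [/eqP size_x size_s'] [|i] lt_i lt_j /=.
  by rewrite nth_cat size_x lt_j.
by rewrite nth_cat size_x mulSn -addnA ltnNge leq_addr /= addKn IH.
Qed.

End FlattenConst.

Section SlpInputs.
Variables (F : fieldType) (n : nat) (g r : 'I_n -> F) (b : 'I_n -> 'I_n.+1 -> F).

Let size_map_enum T (h : 'I_n -> T) : size [seq h i | i <- enum 'I_n] = n.
Proof. by rewrite size_map size_enum_ord. Qed.

Let nth_map_enum T (x0 : T) (h : 'I_n -> T) (l : 'I_n) :
  nth x0 [seq h i | i <- enum 'I_n] l = h l.
Proof. by rewrite (nth_map l) ?nth_ord_enum ?size_enum_ord. Qed.

Let blocks_b := [seq [seq b i j | j <- enum 'I_n.+1] | i <- enum 'I_n].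

Let size_blocks_b : all (fun x => size x == n.+1) blocks_b.
Proof. by apply/allP => x /mapP [i _ ->]; rewrite size_map size_enum_ord. Qed.

Let slp_inputsE :
  slp_inputs g r b = [seq g i | i <- enum 'I_n] ++ [seq r i | i <- enum 'I_n] ++ flatten blocks_b.
Proof. by []. Qed.

Lemma size_slp_inputs : size (slp_inputs g r b) = input_size n.
Proof.
rewrite slp_inputsE !size_cat (size_flatten_const size_blocks_b) !size_map_enum.
by rewrite /input_size; lia.
Qed.

Lemma nth_slp_inputs_g (l : 'I_n) : (slp_inputs g r b)`_l = g l.
Proof. by rewrite slp_inputsE nth_cat_small ?size_map_enum. Qed.

Lemma nth_slp_inputs_r (l : 'I_n) : (slp_inputs g r b)`_(n + l) = r l.
Proof.
have -> : (n + l = size [seq g i | i <- enum 'I_n] + l)%N by rewrite size_map_enum.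
by rewrite slp_inputsE nth_cat_size nth_cat_small ?size_map_enum.
Qed.

Lemma nth_slp_inputs_b (i : 'I_n) (j : 'I_n.+1) :
  (slp_inputs g r b)`_(2 * n + i * n.+1 + j) = b i j.
Proof.
have -> : (2 * n + i * n.+1 + j = size [seq g i | i <- enum 'I_n] +
    (size [seq r i | i <- enum 'I_n] + (i * n.+1 + j)))%N.
  by rewrite !size_map_enum; lia.
rewrite slp_inputsE !nth_cat_size nth_flatten_const ?size_map_enum //.
by rewrite nth_map_enum (nth_map j) ?size_enum_ord // nth_ord_enum.
Qed.

End SlpInputs.

Section PrecomputedAnnihilators.
Variables (F : finFieldType) (q m n : nat).
Hypothesis q_prime_power : prime_power q.
Hypothesis card_F : #|F| = (q ^ m)%N.
Variables (g : 'I_n -> F) (b : 'I_n -> 'I_n.+1 -> F).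
Hypothesis g_indep : lin_indep_Fq q g.
Hypothesis annPolyE : forall i : 'I_n,
  annPoly q (gprefix g i) = \sum_(j < n.+1) b i j *: 'X^(q ^ j).

(* Pi_(i+1) has degree q^(i+1) < q^n, so its top coefficient in [b] vanishes. *)
Lemma annPoly_coef_top (i : 'I_n) : (i.+1 < n)%N -> b i ord_max = 0.
Proof.
move=> lt_in; have q_gt1 := prime_power_gt1 q_prime_power.
have <- : (annPoly q (gprefix g i))`_(q ^ n) = b i ord_max.
  rewrite annPolyE coef_sum (bigD1 ord_max) //= coefZ coefXn eqxx mulr1 big1 ?addr0 //.
  move=> j neq_j; rewrite coefZ coefXn eqn_exp2l // eq_sym.
  by rewrite -val_eqE /= in neq_j; rewrite (negbTE neq_j) mulr0.
apply: nth_default; rewrite size_annPoly.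
apply: leq_trans (_ : (q ^ i.+1).+1 <= q ^ n)%N; first by rewrite ltnS card_span.
have pos : (0 < q ^ i.+1)%N by rewrite expn_gt0 ltnW.
by apply: leq_trans (leq_pexp2l (ltnW q_gt1) lt_in); rewrite [(q ^ i.+2)%N]expnS; nia.
Qed.

Variable r : 'I_n -> F.
Let inp := slp_inputs g r b.

Lemma qeval_ann_coef_succ (i : 'I_n) x : (i.+1 < n)%N ->
  qeval q n (ann_coef n inp i.+1) x = (annPoly q (gprefix g i)).[x].
Proof.
move=> lt_in; rewrite annPolyE horner_qpoly big_ord_recr /= annPoly_coef_top //.
rewrite mul0r addr0; apply: eq_bigr => j _.
rewrite /ann_coef /inp nth_cat_small ?size_slp_inputs; last first.
  by rewrite /input_size /=; have := ltn_ord i; have := ltn_ord j; nia.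
by rewrite -(nth_slp_inputs_b g r b i (widen_ord (leqnSn n) j)).
Qed.

Lemma qeval_ann_coef0 x : (0 < n)%N -> qeval q n (ann_coef n inp 0) x = x.
Proof.
move=> n_gt0; rewrite /qeval (bigD1 (Ordinal n_gt0)) //= big1 => [|j neq_j0].
  by rewrite /ann_coef /= -(size_slp_inputs g r b) -addn1 nth_cat_size mul1r expn0 addr0.
rewrite /ann_coef /ann_slot -val_eqE /= in neq_j0 *; rewrite (negbTE neq_j0).
by rewrite -(size_slp_inputs g r b) -[size _]addn0 nth_cat_size mul0r.
Qed.

Lemma ann_coef_pivot k : (k < n)%N -> qeval q n (ann_coef n inp k) inp`_k != 0.
Proof.
case: k => [|i] lt_kn.
  by rewrite qeval_ann_coef0 // /inp (nth_slp_inputs_g g r b (Ordinal lt_kn)) (lin_indep_Fq_neq0 q_prime_power g_indep).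
have lt_in := ltn_trans (ltnSn i) lt_kn.
rewrite /inp (nth_slp_inputs_g g r b (Ordinal lt_kn)) (@qeval_ann_coef_succ (Ordinal lt_in)) //.
by rewrite -[_ != 0]/(~~ root _ _) root_annPoly (notin_span_prefix q_prime_power card_F g_indep).
Qed.

Lemma ann_coef_root k l : (k < n)%N -> (l < k)%N -> qeval q n (ann_coef n inp k) inp`_l = 0.
Proof.
case: k => [|i] // lt_kn lt_lk.
have lt_in := ltn_trans (ltnSn i) lt_kn; have lt_ln := ltn_trans lt_lk lt_kn.
rewrite /inp (nth_slp_inputs_g g r b (Ordinal lt_ln)) (@qeval_ann_coef_succ (Ordinal lt_in)) //.
by apply/eqP; rewrite -/(root _ _) root_annPoly (in_span_prefix q_prime_power).
Qed.

Lemma lagrange_coef_interp (l : 'I_n) : qeval q n (lagrange_coef q n inp) (g l) = r l.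
Proof.
rewrite -(nth_slp_inputs_g g r b) -(nth_slp_inputs_r g r b).
exact: newton_coef_interp ann_coef_pivot ann_coef_root _ (ltn_ord l).
Qed.

End PrecomputedAnnihilators.

Section Uniqueness.
Variables (F : finFieldType) (q m n : nat).
Hypothesis q_prime_power : prime_power q.
Hypothesis card_F : #|F| = (q ^ m)%N.
Variables (g : 'I_n -> F) (b : 'I_n -> 'I_n.+1 -> F).
Hypothesis g_indep : lin_indep_Fq q g.
Hypothesis annPolyE : forall i : 'I_n,
  annPoly q (gprefix g i) = \sum_(j < n.+1) b i j *: 'X^(q ^ j).

Let interp := lagrange_coef_interp q_prime_power card_F g_indep annPolyE.

Lemma moore_linv : exists B : 'M[F]_n, B *m moore q g = 1%:M.
Proof.
exists (\matrix_(l, j) lagrange_coef q n (slp_inputs g (fun t => (t == l)%:R) b) j).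
apply/matrixP => l c; rewrite !mxE eq_sym.
by apply: etrans (interp (fun t => (t == l)%:R) c); apply: eq_bigr => j _; rewrite !mxE.
Qed.

Lemma det_moore_neq0 : \det (moore q g) != 0.
Proof.
have [B BM1] := moore_linv; apply/negP => /eqP det0.
by have := congr1 determinant BM1; rewrite det_mulmx det0 mulr0 det1 => /eqP; rewrite eq_sym oner_eq0.
Qed.

Lemma qeval_coef_unique (a a' : nat -> F) :
  (forall l : 'I_n, qeval q n a (g l) = qeval q n a' (g l)) -> forall j : 'I_n, a j = a' j.
Proof.
move=> eq_a; have [B /mulmx1C MB1] := moore_linv.
pose v (c : nat -> F) : 'rV[F]_n := \row_j c j.
have vM c : v c *m moore q g = \row_l qeval q n c (g l).
  by apply/rowP => l; rewrite !mxE; apply: eq_bigr => j _; rewrite !mxE.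
have /(congr1 (mulmx^~ B)) : v a *m moore q g = v a' *m moore q g.
  by rewrite !vM; apply/rowP => l; rewrite !mxE eq_a.
by rewrite -!mulmxA MB1 !mulmx1 => /rowP eq_v j; have := eq_v j; rewrite !mxE.
Qed.

Lemma qLagrange_qpoly r : exists a : nat -> F,
  qLagrange q g r = \sum_(j < n) a j *: 'X^(q ^ j) /\
  forall l : 'I_n, qeval q n a (g l) = r l.
Proof.
have [c det_c] := det_moore_border_qpoly q g r.
exists (fun j => - (\det (moore q g))^-1 * c j).
have qLagrangeE : qLagrange q g r = \sum_(j < n) (- (\det (moore q g))^-1 * c j) *: 'X^(q ^ j).
  rewrite qLagrange_moore_border det_c scaler_sumr.
  by apply: eq_bigr => j _; rewrite scalerA.
split=> // l; rewrite /qeval -horner_qpoly -qLagrangeE qLagrange_moore_border hornerZ.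
by rewrite horner_det_moore_border; field; apply: det_moore_neq0.
Qed.

End Uniqueness.

Theorem lemma37 :
  exists C : nat,
  forall (F : finFieldType) (q m n : nat),
    prime_power q -> (0 < m)%N -> #|F| = (q ^ m)%N ->
    exists (P : seq (instr F)) (out : seq nat),
      size out = n /\ (cost P <= C * n ^ 2)%N /\
      forall (g r : 'I_n -> F) (b : 'I_n -> 'I_n.+1 -> F),
        lin_indep_Fq q g ->
        (forall i : 'I_n,
           annPoly q (gprefix g i) = \sum_(j < n.+1) b i j *: 'X^(q ^ j)) ->
        exists st : seq F,
          run q (slp_inputs g r b) P = Some st /\
          qLagrange q g r = \sum_(j < n) st`_(nth 0%N out j) *: 'X^(q ^ j).
Proof.
exists 9%N => F q m n q_prime_power _ card_F.
exists (lagrange_prog F n), (lagrange_out n); split; first by rewrite size_map size_iota.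
split=> [|g r b g_indep annPolyE]; first exact: cost_lagrange_prog.
have [st [run_st out_st]] := run_lagrange_prog (size_slp_inputs g r b)
  (ann_coef_pivot q_prime_power card_F g_indep annPolyE r).
exists st; split=> //.
have [a [-> interp_a]] := qLagrange_qpoly q_prime_power card_F g_indep annPolyE r.
apply: eq_bigr => j _; rewrite out_st //; congr (_ *: _).
apply: (qeval_coef_unique q_prime_power card_F g_indep annPolyE) => l.
by rewrite interp_a (lagrange_coef_interp q_prime_power card_F g_indep annPolyE).
Qed.
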